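(* Let $p,g_i,S,d,R,\eta_i,\beta,f_\gamma,N,D,p^*$ be as in the context. Suppose that for all positive integers $n',d'$ and all integers $r\ge 0$ we are given a set $K^r_{n',2d'}$ of forms of degree $2d'$ in $n'$ variables such that: (a) $K^r_{n',2d'}\subseteq P_{n',2d'}$ for all $r$, and there exists a positive definite form $s_{n',2d'}\in K^0_{n',2d'}$; (b) if a form $q$ of degree $2d'$ in $n'$ variables is positive definite, then there exists $r\in\mathbb{N}$ with $q\in K^r_{n',2d'}$; (c) $K^r_{n',2d'}\subseteq K^{r+1}_{n',2d'}$ for all $r$; (d) if $q\in K^r_{n',2d'}$, then $q+\epsilon\, s_{n',2d'}\in K^r_{n',2d'}$ for all $\epsilon\in[0,1]$. For each positive integer $r$ let $$l_r=\sup\Big\{\gamma\in\mathbb{R} : f_\gamma(z)-\tfrac{1}{r}s_{N,2D}(z)\in K^r_{N,2D}\Big\}$$ (with $\sup\emptyset=-\infty$). Then $l_r\le p^*$ for all $r$, the sequence $\{l_r\}$ is nondecreasing, and $\lim_{r\to\infty}l_r=p^*$.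
   Context: Let $p,g_1,\dots,g_m$ be real polynomials in $x=(x_1,\dots,x_n)$ and let $S=\{x\in\mathbb{R}^n : g_i(x)\ge 0,\ i=1,\dots,m\}$. Let $p^*=\inf_{x\in S}p(x)$ (with $p^*=+\infty$ if $S=\emptyset$). Let $d\ge 1$ be the integer such that $2d$ is the smallest even integer larger than or equal to the maximum of the degrees of $p,g_1,\dots,g_m$. Assume there is $R>0$ with $\sum_{i=1}^n x_i^2\le R$ for all $x\in S$. Let $\eta_1,\dots,\eta_m$ be real numbers with $g_i(x)\le\eta_i$ for all $x\in S$, and let $\beta$ be a real number with $-p(x)\le\beta$ for all $x\in S$. For a polynomial $q$ in $x$ of degree at most $2d$, $y^{2d}q(x/y)$ denotes its homogenization to a form of degree $2d$ in $(x,y)$. For $\gamma\in\mathbb{R}$ define the form in the variables $z=(x,s,y)=(x_1,\dots,x_n,s_0,\dots,s_{m+1},y)$: $$f_\gamma(x,s,y)=\big(\gamma y^{2d}-y^{2d}p(x/y)-s_0^2y^{2d-2}\big)^2+\sum_{i=1}^m\big(y^{2d}g_i(x/y)-s_i^2y^{2d-2}\big)^2+\Big(\big(R+\textstyle\sum_{i=1}^m\eta_i+\beta+\gamma\big)^d y^{2d}-\big(\sum_{i=1}^n x_i^2+\sum_{i=0}^m s_i^2\big)^d-s_{m+1}^{2d}\Big)^2.$$ Set $N=n+m+3$ and $D=2d$, so $f_\gamma$ is a form of degree $2D$ in $N$ variables. $P_{n',2d'}$ denotes the set of nonnegative forms (forms $q$ with $q(x)\ge0$ for all $x$) of degree $2d'$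 in $n'$ variables; a form is positive definite if it is positive at every nonzero point. *)

From Stdlib Require Import Reals List Arith.
Open Scope R_scope.

(* Points of R^n are functions nat -> R; only coordinates 0..n-1 matter. *)

(* A monomial exponent vector: the exponent of variable i is the i-th entry
   (missing entries are 0).  mono_eval e x = prod_i x_i ^ e_i. *)
Fixpoint mono_eval (e : list nat) (x : nat -> R) : R :=
  match e with
  | nil => 1
  | k :: e' => x O ^ k * mono_eval e' (fun i => x (S i))
  end.

Definition mpoly := list (R * list nat).

Definition peval (p : mpoly) (x : nat -> R) : R :=
  fold_right (fun mo acc => fst mo * mono_eval (snd mo) x + acc) 0 p.

Definition mdeg (e : list nat) : nat := fold_right Nat.add O e.

Definition vars_le (p : mpoly) (n : nat) : Prop :=
  forall mo, In mo p -> (length (snd mo) <= n)%nat.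

Definition syn_deg_le (p : mpoly) (k : nat) : Prop :=
  forall mo, In mo p -> (mdeg (snd mo) <= k)%nat.

(* the polynomial (function) p has degree <= k (representation-independent) *)
Definition deg_le (p : mpoly) (k : nat) : Prop :=
  exists q : mpoly, syn_deg_le q k /\ forall x, peval q x = peval p x.

(* Homogenization y^k p(x/y) of a representation all of whose monomials have
   degree <= k. *)
Definition homog (k : nat) (p : mpoly) (x : nat -> R) (y : R) : R :=
  fold_right (fun mo acc => fst mo * mono_eval (snd mo) x * y ^ (k - mdeg (snd mo)) + acc) 0 p.

Fixpoint sumR (n : nat) (f : nat -> R) : R :=
  match n with
  | O => 0
  | S n' => sumR n' f + f n'
  end.

Definition is_form (n k : nat) (f : (nat -> R) -> R) : Prop :=
  exists q : mpoly, vars_le q n /\ (forall mo, In mo q -> mdeg (snd mo) = k)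
                    /\ forall x, f x = peval q x.

Definition nonneg_fun (f : (nat -> R) -> R) : Prop := forall x, 0 <= f x.

Definition pos_def (n : nat) (f : (nat -> R) -> R) : Prop :=
  forall x, (exists i, (i < n)%nat /\ x i <> 0) -> 0 < f x.

Definition inS (m : nat) (g : nat -> mpoly) (x : nat -> R) : Prop :=
  forall i, (1 <= i <= m)%nat -> 0 <= peval (g i) x.

Inductive ER := ERfin (x : R) | ERpinf | ERninf.

Definition ERle (a b : ER) : Prop :=
  match a, b with
  | ERninf, _ => True
  | _, ERpinf => True
  | ERfin x, ERfin y => x <= y
  | _, _ => False
  end.

(* l is the supremum (in the extended reals) of the set A; sup of empty = -oo *)
Definition ER_is_sup (A : R -> Prop) (l : ER) : Prop :=
  (forall x, A x -> ERle (ERfin x) l) /\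
  (forall u, (forall x, A x -> ERle (ERfin x) u) -> ERle l u).

(* l is the infimum of A; inf of empty = +oo *)
Definition ER_is_inf (A : R -> Prop) (l : ER) : Prop :=
  (forall x, A x -> ERle l (ERfin x)) /\
  (forall u, (forall x, A x -> ERle u (ERfin x)) -> ERle u l).

Definition ER_limit (u : nat -> ER) (L : ER) : Prop :=
  match L with
  | ERfin a => forall eps, 0 < eps -> exists N, forall k, (N <= k)%nat ->
                 exists v, u k = ERfin v /\ Rabs (v - a) < eps
  | ERpinf => forall M, exists N, forall k, (N <= k)%nat -> ERle (ERfin M) (u k)
  | ERninf => forall M, exists N, forall k, (N <= k)%nat -> ERle (u k) (ERfin M)
  end.

(* The form f_gamma in the N = n+m+3 variables z = (x_0..x_{n-1}, s_0..s_{m+1}, y):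
   x_i = z i, s_j = z (n+j), y = z (n+m+2).  The g_i and eta_i are indexed 1..m. *)
Definition f_gamma (n m d : nat) (p : mpoly) (g : nat -> mpoly) (Rb : R)
    (eta : nat -> R) (beta gamma : R) (z : nat -> R) : R :=
  let y := z (n + m + 2)%nat in
  let sv := fun j => z (n + j)%nat in
  (gamma * y ^ (2 * d) - homog (2 * d) p z y - sv O ^ 2 * y ^ (2 * d - 2)) ^ 2
  + sumR m (fun i => (homog (2 * d) (g (S i)) z y - sv (S i) ^ 2 * y ^ (2 * d - 2)) ^ 2)
  + ((Rb + sumR m (fun i => eta (S i)) + beta + gamma) ^ d * y ^ (2 * d)
     - (sumR n (fun i => z i ^ 2) + sumR (m + 1) (fun j => sv j ^ 2)) ^ d
     - sv (S m) ^ (2 * d)) ^ 2.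

(* f_gamma is the sum of squares of the three slack equations
   gamma y^2d - y^2d p(x/y) = s_0^2 y^(2d-2),  y^2d g_i(x/y) = s_i^2 y^(2d-2)  and the
   homogenized ball constraint.  A point x of S with p(x) < gamma lifts (y = 1) to a zero
   of f_gamma, where s_{N,2D} is positive, so f_gamma - s_{N,2D}/r is not nonnegative:
   hence l_r <= p*.  Conversely, if gamma < p on S then f_gamma has no nontrivial zero:
   for y = 0 the ball equation forces z = 0, and for y <> 0 the point x/y lies in S with
   p(x/y) <= gamma.  So f_gamma is positive definite, and by compactness of the unit
   sphere so is f_gamma - eps s_{N,2D} for some eps > 0; by (b), (c) and (d) gamma is then
   feasible for every large r.  Monotonicity of l_r follows from (c) and (d). *)

From Stdlib Require Import Reals List Arith Lia Lra FunctionalExtensionality Classical.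
Open Scope R_scope.

Lemma sumR_nonneg n f : (forall i, (i < n)%nat -> 0 <= f i) -> 0 <= sumR n f.
Proof.
induction n as [|n IH]; intros Hf; simpl; [lra|].
assert (0 <= sumR n f) by (apply IH; intros; apply Hf; lia).
assert (0 <= f n) by (apply Hf; lia).
lra.
Qed.

Lemma sumR_ge_term n f i :
  (forall j, (j < n)%nat -> 0 <= f j) -> (i < n)%nat -> f i <= sumR n f.
Proof.
induction n as [|n IH]; intros Hf Hi; simpl; [lia|].
destruct (Nat.eq_dec i n) as [->|Hne].
- assert (0 <= sumR n f) by (apply sumR_nonneg; intros; apply Hf; lia). lra.
- assert (f i <= sumR n f) by (apply IH; [intros; apply Hf|]; lia).
  assert (0 <= f n) by (apply Hf; lia). lra.
Qed.

Lemma sumR_le n f g : (forall i, (i < n)%nat -> f i <= g i) -> sumR n f <= sumR n g.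
Proof.
induction n as [|n IH]; intros Hfg; simpl; [lra|].
assert (sumR n f <= sumR n g) by (apply IH; intros; apply Hfg; lia).
assert (f n <= g n) by (apply Hfg; lia).
lra.
Qed.

Lemma sumR_ext n f g : (forall i, (i < n)%nat -> f i = g i) -> sumR n f = sumR n g.
Proof.
induction n as [|n IH]; intros Hfg; simpl; [reflexivity|].
rewrite IH by (intros; apply Hfg; lia). rewrite Hfg by lia. reflexivity.
Qed.

Lemma sumR_const0 n : sumR n (fun _ => 0) = 0.
Proof. induction n as [|n IH]; simpl; [|rewrite IH]; ring. Qed.

Lemma sumR_mulr n f c : sumR n (fun j => f j * c) = sumR n f * c.
Proof. induction n as [|n IH]; simpl; [|rewrite IH]; ring. Qed.

Lemma sumR_Sl m f : sumR (S m) f = f 0%nat + sumR m (fun i => f (S i)).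
Proof. induction m as [|m IH]; simpl in *; [|rewrite IH]; ring. Qed.

Lemma sumR_sq_nonneg n z : 0 <= sumR n (fun i => z i ^ 2).
Proof. apply sumR_nonneg; intros; apply pow2_ge_0. Qed.

Lemma pow_eq0_inv x k : x ^ k = 0 -> x = 0.
Proof.
intros H. destruct (Req_dec x 0) as [|Hx]; [assumption|].
exfalso; exact (pow_nonzero x k Hx H).
Qed.

Lemma sumR_sq_eq0_inv n z :
  sumR n (fun i => z i ^ 2) = 0 -> forall i, (i < n)%nat -> z i = 0.
Proof.
intros H0 i Hi. apply (pow_eq0_inv _ 2).
pose proof (sumR_ge_term n (fun i => z i ^ 2) i (fun j _ => pow2_ge_0 (z j)) Hi).
pose proof (pow2_ge_0 (z i)). lra.
Qed.

Lemma nth_root_exists k v : (0 < k)%nat -> 0 <= v -> exists t, t ^ k = v.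
Proof.
intros Hk Hv. destruct (Rle_lt_or_eq_dec 0 v Hv) as [Hpos|<-].
- exists (Rpower v (/ INR k)).
  rewrite <- Rpower_pow by (unfold Rpower; apply exp_pos).
  rewrite Rpower_mult, Rinv_l by (apply not_0_INR; lia).
  apply Rpower_1; assumption.
- exists 0. apply pow_i; assumption.
Qed.

Definition on_sphere (N : nat) (z : nat -> R) : Prop :=
  sumR N (fun i => z i ^ 2) = 1 /\ forall i, (N <= i)%nat -> z i = 0.

Lemma on_sphere_first_basis N :
  (0 < N)%nat -> on_sphere N (fun i => if Nat.eqb i 0 then 1 else 0).
Proof.
intros HN; split.
- destruct N as [|N]; [lia|].
  rewrite sumR_Sl, (sumR_ext N _ (fun _ => 0)), sumR_const0 by (intros; simpl; ring).
  simpl; ring.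
- intros i Hi. destruct (Nat.eqb_spec i 0); [lia|reflexivity].
Qed.

Lemma on_sphere_coord_bound N z i : on_sphere N z -> -1 <= z i <= 1.
Proof.
intros [Hs Hz]. destruct (Nat.lt_ge_cases i N) as [Hi|Hi].
- assert (z i ^ 2 <= 1).
  { rewrite <- Hs. apply (sumR_ge_term N (fun j => z j ^ 2)); [|assumption].
    intros; apply pow2_ge_0. }
  split; nra.
- rewrite Hz by assumption. lra.
Qed.

Lemma on_sphere_nonzero N z : on_sphere N z -> exists i, (i < N)%nat /\ z i <> 0.
Proof.
intros [Hs _]. apply NNPP. intros Hno.
assert (Hzero : sumR N (fun i => z i ^ 2) = 0).
{ rewrite (sumR_ext N _ (fun _ => 0)), sumR_const0; [reflexivity|].
  intros i Hi. destruct (Req_dec (z i) 0) as [->|Hne]; [ring|].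
  exfalso; apply Hno; exists i; auto. }
lra.
Qed.

Lemma on_sphere_normalize N z : (exists i, (i < N)%nat /\ z i <> 0) ->
  exists t, 0 < t /\ on_sphere N (fun j => if Nat.ltb j N then z j * t else 0).
Proof.
intros [i [Hi Hzi]].
set (S := sumR N (fun j => z j ^ 2)).
assert (HS : 0 < S).
{ apply Rlt_le_trans with (z i ^ 2).
  - rewrite <- Rsqr_pow2; apply Rsqr_pos_lt; assumption.
  - apply (sumR_ge_term N (fun j => z j ^ 2) i); [intros; apply pow2_ge_0|assumption]. }
exists (/ sqrt S). split; [apply Rinv_0_lt_compat, sqrt_lt_R0; assumption|split].
- rewrite (sumR_ext N _ (fun j => z j ^ 2 * (/ sqrt S) ^ 2)).
  + rewrite sumR_mulr, pow_inv, pow2_sqrt by lra. fold S. field. lra.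
  + intros j Hj. destruct (Nat.ltb_spec j N); [|lia]. apply Rpow_mult_distr.
- intros j Hj. destruct (Nat.ltb_spec j N); [lia|reflexivity].
Qed.

Module SphereCompactness.
From mathcomp Require Import all_boot all_order all_algebra.
From mathcomp Require Import all_classical all_reals all_analysis.
From mathcomp Require Import Rstruct Rstruct_topology.
Import numFieldNormedType.Exports.
Local Open Scope classical_set_scope.

Local Notation PT := (prod_topology (fun _ : nat => R)).

Lemma continuous_cst (c : R) : continuous (fun _ : PT => c).
Proof. by move=> x; exact: cst_continuous. Qed.

Lemma continuous_Rplus (f g : PT -> R) : continuous f -> continuous g ->
  continuous (fun z => Rplus (f z) (g z)).
Proof. by move=> hf hg x; exact: (@continuousD R R^o PT f g x (hf x) (hg x)). Qed.

Lemma continuous_Rmult (f g : PT -> R) : continuous f -> continuous g ->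
  continuous (fun z => Rmult (f z) (g z)).
Proof. by move=> hf hg x; exact: (continuousM (hf x) (hg x)). Qed.

Lemma continuous_pow (f : PT -> R) k : continuous f -> continuous (fun z => pow (f z) k).
Proof.
move=> hf; elim: k => [|k IH] /=; first exact: continuous_cst.
exact: continuous_Rmult.
Qed.

Lemma continuous_coord (j : nat) : continuous (fun x : PT => x j).
Proof. exact: (@proj_continuous nat (fun _ => R) j). Qed.

Lemma continuous_mono_eval_shift (e : list nat) (j : nat) :
  continuous (fun x : PT => mono_eval e (fun i => x (j + i)%nat)).
Proof.
elim: e j => [|k e IH] j /=; first exact: continuous_cst.
apply: continuous_Rmult; first exact/continuous_pow/continuous_coord.
have -> : (fun x : PT => mono_eval e (fun i => x (j + S i)%nat)) =
          (fun x : PT => mono_eval e (fun i => x (S j + i)%nat)).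
  by apply: funext => x; congr mono_eval; apply: funext => i; rewrite addnS.
exact: IH.
Qed.

Lemma continuous_peval (q : mpoly) : continuous (fun x : PT => peval q x).
Proof.
elim: q => [|mo q IH]; first exact: continuous_cst.
apply: continuous_Rplus => //; apply: continuous_Rmult; first exact: continuous_cst.
exact: (continuous_mono_eval_shift _ 0).
Qed.

Lemma continuous_sumsq (N : nat) : continuous (fun x : PT => sumR N (fun i => pow (x i) 2)).
Proof.
elim: N => [|N IH]; first exact: continuous_cst.
exact: (continuous_Rplus _ _ IH (continuous_pow _ 2 (continuous_coord N))).
Qed.

(* The sphere is closed inside the compact box [-1,1]^N x {0}^(nat - N) of
   the product topology, so Tychonoff and the extreme value theorem apply. *)
Lemma peval_sphere_min (N : nat) (q : mpoly) : lt 0 N ->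
  exists z0, on_sphere N z0 /\ forall z, on_sphere N z -> Rle (peval q z0) (peval q z).
Proof.
move=> N0.
pose box : nat -> set R := fun i =>
  if Nat.ltb i N then `[(-1)%R, 1%R]%classic else [set 0%R]%classic.
pose sphere := [set z : PT | sumR N (fun i => pow (z i) 2) = 1].
have box_compact : compact [set f : PT | forall i, box i (f i)].
  apply: (@tychonoff nat (fun _ => R) box) => i; rewrite /box.
  by case: (Nat.ltb i N); [exact: segment_compact | exact: compact_set1].
have sphere_closed : closed sphere.
  apply: (@preimage_closed PT R _ [set x | x = 1]); last exact: closed_eq.
  by move=> x _; exact: continuous_sumsq.
have in_set : forall z, on_sphere N z ->
    ([set f : PT | forall i, box i (f i)] `&` sphere) z.
  move=> z Hz; split; last by case: Hz.
  move=> i; rewrite /box; case: Nat.ltb_spec => Hi.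
  - have [H1 H2] := on_sphere_coord_bound N z i Hz.
    by rewrite /= in_itv /=; apply/andP; split; apply/RleP.
  - by case: Hz => _ ->.
have nonempty : ([set f : PT | forall i, box i (f i)] `&` sphere) !=set0.
  by eexists; exact: in_set (on_sphere_first_basis N N0).
have [z0 Hz0 Hmin] := compact_EVT_min nonempty
  (compact_closedI box_compact sphere_closed)
  (@continuous_subspaceT PT R _ _ (continuous_peval q)).
move: Hz0 => /set_mem [Hbox Hsph].
exists z0; split.
  split => // i Hi; have := Hbox i; rewrite /box.
  by case: Nat.ltb_spec => //; lia.
by move=> z Hz; apply/RleP; apply: Hmin; apply/mem_set; exact: in_set.
Qed.
End SphereCompactness.

Lemma mono_eval_ext e x z :
  (forall i, (i < length e)%nat -> x i = z i) -> mono_eval e x = mono_eval e z.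
Proof.
revert x z; induction e as [|k e IH]; intros x z Hxz; simpl; [reflexivity|].
rewrite (Hxz 0%nat) by (simpl; lia).
f_equal. apply IH. intros i Hi. apply Hxz. simpl. lia.
Qed.

Lemma peval_ext q n x z :
  vars_le q n -> (forall i, (i < n)%nat -> x i = z i) -> peval q x = peval q z.
Proof.
induction q as [|mo q IH]; intros Hv Hxz; [reflexivity|].
unfold peval; simpl; fold (peval q x) (peval q z).
rewrite IH, (mono_eval_ext (snd mo) x z); [reflexivity| |now intros mo' ?; apply Hv; right|exact Hxz].
intros i Hi. apply Hxz. specialize (Hv mo (or_introl eq_refl)). lia.
Qed.

Lemma mono_eval_scale e x t :
  mono_eval e (fun i => x i * t) = t ^ mdeg e * mono_eval e x.
Proof.
revert x; induction e as [|k e IH]; intros x; simpl; [ring|].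
rewrite (IH (fun i => x (S i))), pow_add, Rpow_mult_distr. ring.
Qed.

Lemma peval_scale q k x t : (forall mo, In mo q -> mdeg (snd mo) = k) ->
  peval q (fun i => x i * t) = t ^ k * peval q x.
Proof.
induction q as [|mo q IH]; intros Hk; unfold peval; simpl; [ring|].
fold (peval q x) (peval q (fun i => x i * t)).
rewrite IH by (intros; apply Hk; right; assumption).
rewrite mono_eval_scale, (Hk mo (or_introl eq_refl)). ring.
Qed.

Lemma homog_1 k p x : homog k p x 1 = peval p x.
Proof.
induction p as [|mo p IH]; unfold homog, peval in *; simpl; [reflexivity|].
rewrite IH, pow1. ring.
Qed.

Lemma homog_dehomog k p z y : syn_deg_le p k -> y <> 0 ->
  homog k p z y = y ^ k * peval p (fun i => z i * / y).
Proof.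
induction p as [|mo p IH]; intros Hdeg Hy; unfold homog, peval in *; simpl; [ring|].
rewrite IH by (auto; intros mo' ?; apply Hdeg; right; assumption).
rewrite mono_eval_scale, pow_inv.
assert (Hk : (mdeg (snd mo) <= k)%nat) by (apply Hdeg; left; reflexivity).
replace (y ^ k) with (y ^ (k - mdeg (snd mo)) * y ^ mdeg (snd mo))
  by (rewrite <- pow_add; f_equal; lia).
field. apply pow_nonzero; assumption.
Qed.

Lemma peval_app q1 q2 x : peval (q1 ++ q2) x = peval q1 x + peval q2 x.
Proof.
induction q1 as [|mo q1 IH]; unfold peval in *; simpl; [|rewrite IH]; ring.
Qed.

Definition pscale (c : R) (q : mpoly) : mpoly := map (fun mo => (c * fst mo, snd mo)) q.

Lemma peval_pscale c q x : peval (pscale c q) x = c * peval q x.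
Proof.
induction q as [|mo q IH]; unfold peval, pscale in *; simpl; [|rewrite IH; simpl]; ring.
Qed.

Fixpoint exp_add (a b : list nat) : list nat :=
  match a, b with
  | nil, _ => b
  | _, nil => a
  | i :: a', j :: b' => (i + j)%nat :: exp_add a' b'
  end.

Lemma mono_eval_exp_add a b x :
  mono_eval (exp_add a b) x = mono_eval a x * mono_eval b x.
Proof.
revert b x; induction a as [|i a IH]; intros [|j b] x; simpl; try ring.
rewrite IH, pow_add. ring.
Qed.

Lemma mdeg_exp_add a b : mdeg (exp_add a b) = (mdeg a + mdeg b)%nat.
Proof.
revert b; induction a as [|i a IH]; intros [|j b]; simpl; try rewrite IH; lia.
Qed.

Lemma length_exp_add a b : length (exp_add a b) = Nat.max (length a) (length b).
Proof.
revert b; induction a as [|i a IH]; intros [|j b]; simpl; try rewrite IH; lia.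
Qed.

Definition pmul (q1 q2 : mpoly) : mpoly :=
  flat_map (fun a => map (fun b => (fst a * fst b, exp_add (snd a) (snd b))) q2) q1.

Lemma peval_pmul q1 q2 x : peval (pmul q1 q2) x = peval q1 x * peval q2 x.
Proof.
assert (Hmono : forall a, peval (map (fun b => (fst a * fst b, exp_add (snd a) (snd b))) q2) x
                          = fst a * mono_eval (snd a) x * peval q2 x).
{ intros a. induction q2 as [|b q2 IH]; unfold peval in *; simpl; [ring|].
  rewrite IH, mono_eval_exp_add. ring. }
induction q1 as [|a q1 IH]; unfold pmul in *; simpl; [unfold peval; simpl; ring|].
rewrite peval_app, IH, Hmono.
change (peval (a :: q1) x) with (fst a * mono_eval (snd a) x + peval q1 x). ring.
Qed.

Lemma is_form_ext n k f g : (forall z, f z = g z) -> is_form n k f -> is_form n k g.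
Proof.
intros Hfg [q [Hv [Hdeg Hq]]]. exists q. repeat split; auto.
intros x. rewrite <- Hfg. apply Hq.
Qed.

Lemma is_form_zero n k : is_form n k (fun _ => 0).
Proof. exists nil. repeat split; intros mo []. Qed.

Lemma is_form_one n : is_form n 0 (fun _ => 1).
Proof.
exists ((1, nil) :: nil). repeat split.
- intros mo [<-|[]]. simpl; lia.
- intros mo [<-|[]]. reflexivity.
- intros x. unfold peval; simpl; ring.
Qed.

Lemma is_form_add n k f g :
  is_form n k f -> is_form n k g -> is_form n k (fun z => f z + g z).
Proof.
intros [q1 [Hv1 [Hd1 Hq1]]] [q2 [Hv2 [Hd2 Hq2]]]. exists (q1 ++ q2). repeat split.
- intros mo Hmo. apply in_app_or in Hmo. destruct Hmo; auto.
- intros mo Hmo. apply in_app_or in Hmo. destruct Hmo; auto.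
- intros x. rewrite peval_app, Hq1, Hq2. reflexivity.
Qed.

Lemma is_form_scale n k c f : is_form n k f -> is_form n k (fun z => c * f z).
Proof.
intros [q [Hv [Hdeg Hq]]]. exists (pscale c q). repeat split.
- intros mo Hmo. apply in_map_iff in Hmo. destruct Hmo as [mo' [<- Hmo]]. exact (Hv mo' Hmo).
- intros mo Hmo. apply in_map_iff in Hmo. destruct Hmo as [mo' [<- Hmo]]. exact (Hdeg mo' Hmo).
- intros x. rewrite peval_pscale, Hq. reflexivity.
Qed.

Lemma is_form_sub n k f g :
  is_form n k f -> is_form n k g -> is_form n k (fun z => f z - g z).
Proof.
intros Hf Hg. apply (is_form_ext n k (fun z => f z + (-1) * g z)); [intros; ring|].
apply is_form_add; [|apply is_form_scale]; assumption.
Qed.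

Lemma is_form_mul n k1 k2 k f g : (k = k1 + k2)%nat ->
  is_form n k1 f -> is_form n k2 g -> is_form n k (fun z => f z * g z).
Proof.
intros -> [q1 [Hv1 [Hd1 Hq1]]] [q2 [Hv2 [Hd2 Hq2]]]. exists (pmul q1 q2). repeat split.
- intros mo Hmo. apply in_flat_map in Hmo. destruct Hmo as [a [Ha Hmo]].
  apply in_map_iff in Hmo. destruct Hmo as [b [<- Hb]]. simpl.
  rewrite length_exp_add. specialize (Hv1 a Ha). specialize (Hv2 b Hb). lia.
- intros mo Hmo. apply in_flat_map in Hmo. destruct Hmo as [a [Ha Hmo]].
  apply in_map_iff in Hmo. destruct Hmo as [b [<- Hb]]. simpl.
  rewrite mdeg_exp_add, (Hd1 a Ha), (Hd2 b Hb). reflexivity.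
- intros x. rewrite peval_pmul, Hq1, Hq2. reflexivity.
Qed.

Lemma is_form_pow n k j k' f : (k' = j * k)%nat ->
  is_form n k f -> is_form n k' (fun z => f z ^ j).
Proof.
intros -> Hf. induction j as [|j IH]; simpl; [apply is_form_one|].
apply (is_form_mul n k (j * k)); auto.
Qed.

Lemma is_form_sum n k m F : (forall i, (i < m)%nat -> is_form n k (F i)) ->
  is_form n k (fun z => sumR m (fun i => F i z)).
Proof.
induction m as [|m IH]; intros HF; simpl; [apply is_form_zero|].
apply is_form_add; [apply IH; intros|]; apply HF; lia.
Qed.

Lemma is_form_mono n e : (length e <= n)%nat -> is_form n (mdeg e) (mono_eval e).
Proof.
intros He. exists ((1, e) :: nil). repeat split.
- intros mo [<-|[]]. assumption.
- intros mo [<-|[]]. reflexivity.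
- intros x. unfold peval; simpl; ring.
Qed.

Lemma is_form_coord n i : (i < n)%nat -> is_form n 1 (fun z => z i).
Proof.
intros Hi. set (e := repeat 0%nat i ++ 1%nat :: nil).
assert (Heval : forall x, mono_eval e x = x i).
{ unfold e. clear. induction i as [|i IH]; intros x; simpl; [ring|]. rewrite IH. ring. }
assert (Hdeg : mdeg e = 1%nat) by (unfold e; clear; induction i; simpl; auto).
apply (is_form_ext n 1 (mono_eval e)); [exact Heval|].
rewrite <- Hdeg at 1. apply is_form_mono.
unfold e. rewrite length_app, repeat_length. simpl; lia.
Qed.

Lemma is_form_coord_pow n i k : (i < n)%nat -> is_form n k (fun z => z i ^ k).
Proof. intros Hi. apply (is_form_pow n 1); [lia|apply is_form_coord, Hi]. Qed.

Lemma is_form_homog n k p j : syn_deg_le p k -> vars_le p n -> (j < n)%nat ->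
  is_form n k (fun z => homog k p z (z j)).
Proof.
intros Hdeg Hv Hj. induction p as [|mo p IH]; unfold homog in *; simpl.
- apply is_form_zero.
- assert (Hmo : (mdeg (snd mo) <= k)%nat) by (apply Hdeg; left; reflexivity).
  apply is_form_add.
  + apply (is_form_mul n (mdeg (snd mo)) (k - mdeg (snd mo))); [lia| |].
    * apply (is_form_ext n _ (fun z => fst mo * mono_eval (snd mo) z)); [intros; ring|].
      apply is_form_scale, is_form_mono, Hv. left; reflexivity.
    * apply is_form_coord_pow, Hj.
  + apply IH; intros mo' ?; [apply Hdeg|apply Hv]; right; assumption.
Qed.

Lemma is_form_eval_scaled N k F z t : is_form N k F ->
  F (fun j => if Nat.ltb j N then z j * t else 0) = t ^ k * F z.
Proof.
intros [q [Hv [Hdeg Hq]]]. rewrite !Hq, <- (peval_scale q k z t Hdeg).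
apply (peval_ext q N); [assumption|].
intros j Hj. destruct (Nat.ltb_spec j N); [reflexivity|lia].
Qed.

Lemma is_form_sphere_min N k F : (0 < N)%nat -> is_form N k F ->
  exists z0, on_sphere N z0 /\ forall z, on_sphere N z -> F z0 <= F z.
Proof.
intros HN [q [_ [_ Hq]]].
destruct (SphereCompactness.peval_sphere_min N q HN) as [z0 [Hz0 Hmin]].
exists z0. split; [assumption|]. intros z Hz. rewrite !Hq. apply Hmin, Hz.
Qed.

Lemma is_form_sphere_max N k F : (0 < N)%nat -> is_form N k F ->
  exists z1, on_sphere N z1 /\ forall z, on_sphere N z -> F z <= F z1.
Proof.
intros HN HF.
destruct (is_form_sphere_min N k (fun z => -1 * F z) HN (is_form_scale _ _ _ _ HF))
  as [z1 [Hz1 Hmin]].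
exists z1. split; [assumption|]. intros z Hz. specialize (Hmin z Hz). lra.
Qed.

(* Minimum of F and maximum of G on the unit sphere give a uniform margin,
   which homogeneity transports to every nonzero point. *)
Lemma pos_def_sub_small N k F G : (0 < N)%nat ->
  is_form N k F -> is_form N k G -> pos_def N F ->
  exists eps, 0 < eps /\ pos_def N (fun z => F z - eps * G z).
Proof.
intros HN HF HG HFpos.
destruct (is_form_sphere_min N k F HN HF) as [z0 [Hz0 Fmin]].
destruct (is_form_sphere_max N k G HN HG) as [z1 [Hz1 Gmax]].
assert (Hc : 0 < F z0) by (apply HFpos, on_sphere_nonzero, Hz0).
pose proof (Rabs_pos (G z1)). pose proof (Rle_abs (G z1)).
exists (F z0 / (Rabs (G z1) + 1)). split; [apply Rdiv_lt_0_compat; lra|].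
intros z Hz. destruct (on_sphere_normalize N z Hz) as [t [Ht Hw]].
specialize (Fmin _ Hw). specialize (Gmax _ Hw).
rewrite (is_form_eval_scaled N k F) in Fmin by assumption.
rewrite (is_form_eval_scaled N k G) in Gmax by assumption.
assert (Htk : 0 < t ^ k) by (apply pow_lt, Ht).
assert (Hmargin : F z0 / (Rabs (G z1) + 1) * Rabs (G z1) < F z0).
{ apply Rmult_lt_reg_r with (Rabs (G z1) + 1); [lra|].
  field_simplify; lra. }
assert (0 < t ^ k * (F z - F z0 / (Rabs (G z1) + 1) * G z)).
{ assert (F z0 / (Rabs (G z1) + 1) * (t ^ k * G z)
          <= F z0 / (Rabs (G z1) + 1) * Rabs (G z1)).
  { apply Rmult_le_compat_l; [apply Rlt_le, Rdiv_lt_0_compat|]; lra. }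
  nra. }
nra.
Qed.

Lemma slack_eq0_nonneg d a c y : (1 <= d)%nat -> y <> 0 ->
  y ^ (2 * d) * a - c ^ 2 * y ^ (2 * d - 2) = 0 -> 0 <= a.
Proof.
intros Hd Hy Heq.
assert (Hfactor : y ^ (2 * d - 2) * (y ^ 2 * a - c ^ 2) = 0).
{ rewrite <- Heq.
  replace (y ^ (2 * d)) with (y ^ (2 * d - 2) * y ^ 2) by (rewrite <- pow_add; f_equal; lia).
  ring. }
apply Rmult_integral in Hfactor as [Habs|Hsq].
- exfalso. exact (pow_nonzero y _ Hy Habs).
- assert (0 < y ^ 2) by (rewrite <- Rsqr_pow2; apply Rsqr_pos_lt, Hy).
  pose proof (pow2_ge_0 c). nra.
Qed.

Section FGamma.
Variables (n m d : nat) (p : mpoly) (g : nat -> mpoly) (Rb : R) (eta : nat -> R)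
  (beta gamma : R).

Definition fg_y (z : nat -> R) : R := z (n + m + 2)%nat.

Definition fg_radius : R := Rb + sumR m (fun i => eta (S i)) + beta + gamma.

Definition fg_norm2 (z : nat -> R) : R :=
  sumR n (fun i => z i ^ 2) + sumR (m + 1) (fun j => z (n + j)%nat ^ 2).

Definition fg_obj (z : nat -> R) : R :=
  gamma * fg_y z ^ (2 * d) - homog (2 * d) p z (fg_y z)
  - z (n + 0)%nat ^ 2 * fg_y z ^ (2 * d - 2).

Definition fg_con (i : nat) (z : nat -> R) : R :=
  homog (2 * d) (g (S i)) z (fg_y z) - z (n + S i)%nat ^ 2 * fg_y z ^ (2 * d - 2).

Definition fg_ball (z : nat -> R) : R :=
  fg_radius ^ d * fg_y z ^ (2 * d) - fg_norm2 z ^ d - z (n + S m)%nat ^ (2 * d).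

Lemma f_gamma_split z : f_gamma n m d p g Rb eta beta gamma z =
  fg_obj z ^ 2 + sumR m (fun i => fg_con i z ^ 2) + fg_ball z ^ 2.
Proof. reflexivity. Qed.

Hypothesis d_pos : (1 <= d)%nat.
Hypothesis p_deg : syn_deg_le p (2 * d).
Hypothesis g_deg : forall i, (1 <= i <= m)%nat -> syn_deg_le (g i) (2 * d).
Hypothesis p_vars : vars_le p n.
Hypothesis g_vars : forall i, (1 <= i <= m)%nat -> vars_le (g i) n.

Lemma fg_slack_is_form j : (j <= m + 1)%nat ->
  is_form (n + m + 3) (2 * d) (fun z => z (n + j)%nat ^ 2 * fg_y z ^ (2 * d - 2)).
Proof.
intros Hj. apply (is_form_mul _ 2 (2 * d - 2)); [lia|apply is_form_coord_pow; lia|].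
apply is_form_coord_pow; lia.
Qed.

Lemma f_gamma_is_form : is_form (n + m + 3) (2 * (2 * d)) (f_gamma n m d p g Rb eta beta gamma).
Proof.
assert (Hpoly : forall q, syn_deg_le q (2 * d) -> vars_le q n ->
          is_form (n + m + 3) (2 * d) (fun z => homog (2 * d) q z (fg_y z))).
{ intros q Hdeg Hv. apply is_form_homog; [assumption| |lia].
  intros mo Hmo. specialize (Hv mo Hmo). lia. }
apply (is_form_ext _ _ (fun z => fg_obj z ^ 2 + sumR m (fun i => fg_con i z ^ 2)
                                 + fg_ball z ^ 2)); [intros; symmetry; apply f_gamma_split|].
repeat apply is_form_add; [|apply is_form_sum; intros i Hi|];
  apply (is_form_pow _ (2 * d)); try lia.
- apply is_form_sub; [apply is_form_sub|apply fg_slack_is_form; lia].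
  + apply is_form_scale, is_form_coord_pow; lia.
  + apply Hpoly; assumption.
- apply is_form_sub; [apply Hpoly; [apply g_deg|apply g_vars]; lia|].
  apply fg_slack_is_form; lia.
- apply is_form_sub; [apply is_form_sub|apply is_form_coord_pow; lia].
  + apply is_form_scale, is_form_coord_pow; lia.
  + apply (is_form_pow _ 2); [lia|]. unfold fg_norm2.
    apply is_form_add; apply is_form_sum; intros; apply is_form_coord_pow; lia.
Qed.

Lemma f_gamma_nonpos_inv z : f_gamma n m d p g Rb eta beta gamma z <= 0 ->
  fg_obj z = 0 /\ (forall i, (i < m)%nat -> fg_con i z = 0) /\ fg_ball z = 0.
Proof.
rewrite f_gamma_split. intros Hle.
pose proof (sumR_sq_nonneg m (fun i => fg_con i z)).
pose proof (pow2_ge_0 (fg_obj z)). pose proof (pow2_ge_0 (fg_ball z)).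
split; [|split].
- apply (pow_eq0_inv _ 2). lra.
- apply sumR_sq_eq0_inv. lra.
- apply (pow_eq0_inv _ 2). lra.
Qed.

Lemma fg_ball_at_infinity z : fg_y z = 0 -> fg_ball z = 0 ->
  forall i, (i < n + m + 2)%nat -> z i = 0.
Proof.
unfold fg_ball. intros Hy Hball i Hi. rewrite Hy, pow_i, Rmult_0_r in Hball by lia.
pose proof (sumR_sq_nonneg n z). pose proof (sumR_sq_nonneg (m + 1) (fun j => z (n + j)%nat)).
assert (Hn2 : 0 <= fg_norm2 z) by (unfold fg_norm2; lra).
pose proof (pow_le _ d Hn2).
assert (Hlast : 0 <= z (n + S m)%nat ^ (2 * d)) by (rewrite pow_mult; apply pow_le, pow2_ge_0).
assert (Hnorm : fg_norm2 z = 0) by (apply (pow_eq0_inv _ d); lra).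
unfold fg_norm2 in Hnorm.
destruct (Nat.lt_ge_cases i n) as [Hin|Hin].
- apply (sumR_sq_eq0_inv n); [lra|assumption].
- replace i with (n + (i - n))%nat by lia.
  destruct (Nat.eq_dec (i - n) (S m)) as [->|Hne].
  + apply (pow_eq0_inv _ (2 * d)). lra.
  + apply (sumR_sq_eq0_inv (m + 1) (fun j => z (n + j)%nat)); [lra|lia].
Qed.

Lemma fg_obj_dehomog z : fg_y z <> 0 -> fg_obj z = 0 ->
  peval p (fun i => z i * / fg_y z) <= gamma.
Proof.
intros Hy Hobj. unfold fg_obj in Hobj. rewrite homog_dehomog in Hobj by assumption.
enough (0 <= gamma - peval p (fun i => z i * / fg_y z)) by lra.
apply (slack_eq0_nonneg d _ (z (n + 0)%nat) (fg_y z)); [assumption..|].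
rewrite <- Hobj. ring.
Qed.

Lemma fg_con_dehomog i z : (i < m)%nat -> fg_y z <> 0 -> fg_con i z = 0 ->
  0 <= peval (g (S i)) (fun j => z j * / fg_y z).
Proof.
intros Hi Hy Hcon. unfold fg_con in Hcon.
rewrite homog_dehomog in Hcon by (auto; apply g_deg; lia).
apply (slack_eq0_nonneg d _ (z (n + S i)%nat) (fg_y z)); assumption.
Qed.

Lemma f_gamma_pos_def : (forall x, inS m g x -> gamma < peval p x) ->
  pos_def (n + m + 3) (f_gamma n m d p g Rb eta beta gamma).
Proof.
intros Hgamma z [i0 [Hi0 Hz0]]. apply Rnot_le_lt. intros Hle.
destruct (f_gamma_nonpos_inv z Hle) as [Hobj [Hcon Hball]].
destruct (Req_dec (fg_y z) 0) as [Hy|Hy].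
- apply Hz0. destruct (Nat.eq_dec i0 (n + m + 2)) as [->|Hne]; [exact Hy|].
  apply (fg_ball_at_infinity z Hy Hball). lia.
- assert (Hin : inS m g (fun j => z j * / fg_y z)).
  { intros i Hi. replace i with (S (i - 1)) by lia.
    apply fg_con_dehomog; [lia|assumption|apply Hcon; lia]. }
  pose proof (Hgamma _ Hin). pose proof (fg_obj_dehomog z Hy Hobj). lra.
Qed.

Definition lift_point (x sl : nat -> R) (t : R) : nat -> R := fun i =>
  if Nat.ltb i n then x i
  else if Nat.ltb i (n + m + 1) then sl (i - n)%nat
  else if Nat.eqb i (n + m + 1) then t else 1.

Lemma lift_point_x x sl t i : (i < n)%nat -> lift_point x sl t i = x i.
Proof. intros Hi. unfold lift_point. destruct (Nat.ltb_spec i n); [reflexivity|lia]. Qed.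

Lemma lift_point_slack x sl t j : (j < m + 1)%nat -> lift_point x sl t (n + j) = sl j.
Proof.
intros Hj. unfold lift_point.
destruct (Nat.ltb_spec (n + j) n); [lia|].
destruct (Nat.ltb_spec (n + j) (n + m + 1)); [|lia].
f_equal. lia.
Qed.

Lemma lift_point_last x sl t : lift_point x sl t (n + S m) = t.
Proof.
unfold lift_point.
destruct (Nat.ltb_spec (n + S m) n); [lia|].
destruct (Nat.ltb_spec (n + S m) (n + m + 1)); [lia|].
destruct (Nat.eqb_spec (n + S m) (n + m + 1)); [reflexivity|lia].
Qed.

Lemma lift_point_y x sl t : fg_y (lift_point x sl t) = 1.
Proof.
unfold fg_y, lift_point.
destruct (Nat.ltb_spec (n + m + 2) n); [lia|].
destruct (Nat.ltb_spec (n + m + 2) (n + m + 1)); [lia|].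
destruct (Nat.eqb_spec (n + m + 2) (n + m + 1)); [lia|reflexivity].
Qed.

Hypothesis S_ball : forall x, inS m g x -> sumR n (fun i => x i ^ 2) <= Rb.
Hypothesis g_bound : forall i, (1 <= i <= m)%nat -> forall x, inS m g x -> peval (g i) x <= eta i.
Hypothesis p_bound : forall x, inS m g x -> - peval p x <= beta.

(* Lift x to y = 1, square roots of the slacks gamma - p(x), g_i(x), and a last
   coordinate absorbing the gap in the ball constraint; the bounds R, eta, beta
   make that gap nonnegative. *)
Lemma f_gamma_zero_point x : inS m g x -> peval p x < gamma ->
  exists z, fg_y z = 1 /\ f_gamma n m d p g Rb eta beta gamma z = 0.
Proof.
intros Hx Hpx.
set (slack j := match j with O => gamma - peval p x | S _ => peval (g j) x end).
assert (Hslack : forall j, (j < m + 1)%nat -> 0 <= slack j).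
{ intros [|j] Hj; simpl; [lra|apply Hx; lia]. }
set (A := sumR n (fun i => x i ^ 2) + sumR (m + 1) slack).
assert (HA : 0 <= A <= fg_radius).
{ unfold A, fg_radius. replace (m + 1)%nat with (S m) by lia. rewrite sumR_Sl. unfold slack.
  pose proof (sumR_sq_nonneg n x). pose proof (S_ball x Hx). pose proof (p_bound x Hx).
  pose proof (sumR_nonneg m (fun i => peval (g (S i)) x) (fun i Hi => Hx (S i) ltac:(lia))).
  assert (sumR m (fun i => peval (g (S i)) x) <= sumR m (fun i => eta (S i)))
    by (apply sumR_le; intros i Hi; apply g_bound; [lia|assumption]).
  lra. }
assert (Hgap : 0 <= fg_radius ^ d - A ^ d) by (pose proof (pow_incr A fg_radius d HA); lra).
destruct (nth_root_exists (2 * d) _ ltac:(lia) Hgap) as [t Ht].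
set (z := lift_point x (fun j => sqrt (slack j)) t).
assert (Hzx : peval p z = peval p x /\ forall i, (i < m)%nat -> peval (g (S i)) z = peval (g (S i)) x).
{ split; [|intros i Hi]; apply (peval_ext _ n); try (apply g_vars; lia);
    try assumption; intros; apply lift_point_x; assumption. }
assert (Hsl : forall j, (j < m + 1)%nat -> z (n + j)%nat ^ 2 = slack j).
{ intros j Hj. unfold z. rewrite lift_point_slack, pow2_sqrt by auto. reflexivity. }
assert (Hy : fg_y z = 1) by apply lift_point_y.
assert (Hlast : z (n + S m)%nat = t) by apply lift_point_last.
assert (Hnorm : fg_norm2 z = A).
{ unfold fg_norm2, A. rewrite (sumR_ext (m + 1) _ slack) by exact Hsl.
  f_equal. apply sumR_ext. intros. unfold z. rewrite lift_point_x; auto. }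
exists z. split; [exact Hy|].
rewrite f_gamma_split, (sumR_ext m _ (fun _ => 0)), sumR_const0.
- unfold fg_obj, fg_ball.
  rewrite Hy, homog_1, (proj1 Hzx), (Hsl 0%nat), Hnorm, Hlast, Ht, !pow1 by lia.
  simpl. ring.
- intros i Hi. unfold fg_con.
  rewrite Hy, homog_1, (proj2 Hzx), (Hsl (S i)), !pow1 by lia.
  simpl. ring.
Qed.

End FGamma.

Section ConeFamily.
Variables (K : nat -> ((nat -> R) -> R) -> Prop) (sN : (nat -> R) -> R).
Hypothesis K_succ : forall r q, K r q -> K (S r) q.
Hypothesis K_add_s : forall r q, K r q -> forall eps, 0 <= eps <= 1 ->
  K r (fun z => q z + eps * sN z).

Lemma K_mono r k q : (r <= k)%nat -> K r q -> K k q.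
Proof. intros Hrk Hq. induction Hrk; auto. Qed.

(* 1/k = 1/r - (1/r - 1/k) with 0 <= 1/r - 1/k <= 1, so property (d) moves the
   weight of sN from 1/r down to 1/k. *)
Lemma K_reweight F r r' k : (1 <= r)%nat -> (r <= k)%nat -> (r' <= k)%nat ->
  K r' (fun z => F z - / INR r * sN z) -> K k (fun z => F z - / INR k * sN z).
Proof.
intros Hr Hrk Hr'k HK.
assert (H1 : 1 <= INR r) by (apply (le_INR 1); assumption).
assert (H2 : INR r <= INR k) by (apply le_INR; assumption).
assert (Hinv : / INR k <= / INR r) by (apply Rinv_le_contravar; lra).
assert (Hinv1 : / INR r <= 1) by (rewrite <- Rinv_1; apply Rinv_le_contravar; lra).
assert (0 < / INR k) by (apply Rinv_0_lt_compat; lra).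
replace (fun z => F z - / INR k * sN z)
  with (fun z => F z - / INR r * sN z + (/ INR r - / INR k) * sN z)
  by (apply functional_extensionality; intros; ring).
apply (K_mono r'); [assumption|].
apply K_add_s; [assumption|lra].
Qed.

End ConeFamily.

Lemma ER_sup_le_inf (A P : R -> Prop) l pstar : ER_is_sup A l -> ER_is_inf P pstar ->
  (forall a v, A a -> P v -> a <= v) -> ERle l pstar.
Proof.
intros [_ Hsup] [_ Hinf] Hav. apply Hsup. intros a Ha.
apply Hinf. intros v Hv. exact (Hav a v Ha Hv).
Qed.

Lemma ER_sup_mono (A B : R -> Prop) la lb : ER_is_sup A la -> ER_is_sup B lb ->
  (forall x, A x -> B x) -> ERle la lb.
Proof. intros [_ HsupA] [HubB _] HAB. apply HsupA. intros x Hx. apply HubB, HAB, Hx. Qed.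

Lemma ER_limit_of_sups (A : nat -> R -> Prop) (P : R -> Prop) (l : nat -> ER) pstar b :
  ER_is_inf P pstar -> (forall v, P v -> b <= v) ->
  (forall r, (1 <= r)%nat -> ER_is_sup (A r) (l r)) ->
  (forall r a v, (1 <= r)%nat -> A r a -> P v -> a <= v) ->
  (forall a, (forall v, P v -> a < v) -> exists r0, forall k, (r0 <= k)%nat -> A k a) ->
  ER_limit l pstar.
Proof.
intros Hinf Hb Hsup Hlow Hev.
assert (Hbracket : forall a, (forall v, P v -> a < v) -> exists r0, forall k, (r0 <= k)%nat ->
          ERle (ERfin a) (l k) /\ ERle (l k) pstar).
{ intros a Ha. destruct (Hev a Ha) as [r0 Hr0]. exists (Nat.max r0 1). intros k Hk. split.
  - apply (proj1 (Hsup k ltac:(lia))), Hr0. lia.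
  - apply (ER_sup_le_inf (A k) P); [apply Hsup; lia|exact Hinf|].
    intros a' v Ha' Hv. apply (Hlow k a' v); [lia|assumption..]. }
destruct Hinf as [Hinf_lb Hinf_glb]. destruct pstar as [a| |].
- intros eps Heps. destruct (Hbracket (a - eps / 2)) as [r0 Hr0].
  { intros v Hv. specialize (Hinf_lb v Hv). simpl in Hinf_lb. lra. }
  exists r0. intros k Hk. destruct (Hr0 k Hk) as [Hlo Hhi].
  destruct (l k) as [v| |]; simpl in *; try contradiction.
  exists v. split; [reflexivity|]. apply Rabs_def1; lra.
- intros M. destruct (Hbracket M) as [r0 Hr0].
  { intros v Hv. exact (False_ind _ (Hinf_lb v Hv)). }
  exists r0. intros k Hk. apply Hr0, Hk.
- destruct (Hinf_glb (ERfin b) Hb).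
Qed.

Section Feasibility.
Variables (n m d : nat) (p : mpoly) (g : nat -> mpoly) (Rb : R) (eta : nat -> R) (beta : R)
  (K : nat -> ((nat -> R) -> R) -> Prop) (sN : (nat -> R) -> R).
Hypothesis d_pos : (1 <= d)%nat.
Hypothesis p_deg : syn_deg_le p (2 * d).
Hypothesis g_deg : forall i, (1 <= i <= m)%nat -> syn_deg_le (g i) (2 * d).
Hypothesis p_vars : vars_le p n.
Hypothesis g_vars : forall i, (1 <= i <= m)%nat -> vars_le (g i) n.
Hypothesis S_ball : forall x, inS m g x -> sumR n (fun i => x i ^ 2) <= Rb.
Hypothesis g_bound : forall i, (1 <= i <= m)%nat -> forall x, inS m g x -> peval (g i) x <= eta i.
Hypothesis p_bound : forall x, inS m g x -> - peval p x <= beta.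
Hypothesis K_nonneg : forall r q, K r q -> nonneg_fun q.
Hypothesis K_succ : forall r q, K r q -> K (S r) q.
Hypothesis K_add_s : forall r q, K r q -> forall eps, 0 <= eps <= 1 ->
  K r (fun z => q z + eps * sN z).
Hypothesis K_exhaustive : forall q, is_form (n + m + 3) (2 * (2 * d)) q ->
  pos_def (n + m + 3) q -> exists r, K r q.
Hypothesis sN_form : is_form (n + m + 3) (2 * (2 * d)) sN.
Hypothesis sN_pos : pos_def (n + m + 3) sN.

Definition feasible (r : nat) (gamma : R) : Prop :=
  K r (fun z => f_gamma n m d p g Rb eta beta gamma z - / INR r * sN z).

Lemma feasible_lower_bound r gamma x : (1 <= r)%nat -> feasible r gamma -> inS m g x ->
  gamma <= peval p x.
Proof.
intros Hr Hfeas Hx. apply Rnot_lt_le. intros Hlt.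
destruct (f_gamma_zero_point n m d p g Rb eta beta gamma d_pos p_vars g_vars
            S_ball g_bound p_bound x Hx Hlt) as [z [Hy Hz]].
specialize (K_nonneg _ _ Hfeas z). simpl in K_nonneg. rewrite Hz in K_nonneg.
assert (0 < sN z) by (apply sN_pos; exists (n + m + 2)%nat; split; [lia|]; unfold fg_y in Hy; lra).
assert (0 < / INR r) by (apply Rinv_0_lt_compat, lt_0_INR; lia).
nra.
Qed.

Lemma feasible_succ r gamma : (1 <= r)%nat -> feasible r gamma -> feasible (S r) gamma.
Proof. intros Hr. apply (K_reweight K sN K_succ K_add_s _ r r (S r)); lia. Qed.

Lemma feasible_eventually gamma : (forall x, inS m g x -> gamma < peval p x) ->
  exists r0, forall k, (r0 <= k)%nat -> feasible k gamma.
Proof.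
intros Hgamma. set (F := f_gamma n m d p g Rb eta beta gamma).
assert (HF : is_form (n + m + 3) (2 * (2 * d)) F) by (apply f_gamma_is_form; assumption).
assert (HFpos : pos_def (n + m + 3) F) by (apply f_gamma_pos_def; assumption).
destruct (pos_def_sub_small (n + m + 3) (2 * (2 * d)) F sN ltac:(lia) HF sN_form HFpos)
  as [eps [Heps Hpos]].
destruct (archimed_cor1 eps Heps) as [r1 [Hr1 Hr1pos]].
destruct (K_exhaustive (fun z => F z - / INR r1 * sN z)) as [r2 Hr2].
{ apply is_form_sub, is_form_scale; assumption. }
{ intros z Hz. specialize (Hpos z Hz). specialize (sN_pos z Hz).
  assert (/ INR r1 * sN z <= eps * sN z) by (apply Rmult_le_compat_r; lra).
  lra. }
exists (Nat.max r1 r2). intros k Hk.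
apply (K_reweight K sN K_succ K_add_s F r1 r2 k); [lia..|exact Hr2].
Qed.

Theorem feasible_sup_converges (l : nat -> ER) pstar :
  ER_is_inf (fun v => exists x, inS m g x /\ v = peval p x) pstar ->
  (forall r, (1 <= r)%nat -> ER_is_sup (feasible r) (l r)) ->
  (forall r, (1 <= r)%nat -> ERle (l r) pstar) /\
  (forall r, (1 <= r)%nat -> ERle (l r) (l (S r))) /\
  ER_limit l pstar.
Proof.
intros Hinf Hsup.
assert (Hlow : forall r a v, (1 <= r)%nat -> feasible r a ->
          (exists x, inS m g x /\ v = peval p x) -> a <= v).
{ intros r a v Hr Ha [x [Hx ->]]. exact (feasible_lower_bound r a x Hr Ha Hx). }
split; [|split].
- intros r Hr. apply (ER_sup_le_inf _ _ _ _ (Hsup r Hr) Hinf). intros; eapply Hlow; eauto.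
- intros r Hr. apply (ER_sup_mono _ _ _ _ (Hsup r Hr) (Hsup (S r) ltac:(lia))).
  intros. apply feasible_succ; assumption.
- apply (ER_limit_of_sups feasible _ l pstar (- beta) Hinf); [|exact Hsup|exact Hlow|].
  + intros v [x [Hx ->]]. specialize (p_bound x Hx). lra.
  + intros a Ha. apply feasible_eventually. intros x Hx. apply Ha. exists x; auto.
Qed.

End Feasibility.

Theorem theorem2p2
  (n m d : nat) (p : mpoly) (g : nat -> mpoly) (Rb : R) (eta : nat -> R) (beta : R)
  (K : nat -> nat -> nat -> ((nat -> R) -> R) -> Prop)
  (s : nat -> nat -> ((nat -> R) -> R))
  (pstar : ER) (l : nat -> ER) :
  (1 <= n)%nat ->
  vars_le p n -> (forall i, (1 <= i <= m)%nat -> vars_le (g i) n) ->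
  (1 <= d)%nat ->
  syn_deg_le p (2 * d) -> (forall i, (1 <= i <= m)%nat -> syn_deg_le (g i) (2 * d)) ->
  (d = 1%nat \/ ~ (deg_le p (2 * d - 2) /\
                    forall i, (1 <= i <= m)%nat -> deg_le (g i) (2 * d - 2))) ->
  0 < Rb -> (forall x, inS m g x -> sumR n (fun i => x i ^ 2) <= Rb) ->
  (forall i, (1 <= i <= m)%nat -> forall x, inS m g x -> peval (g i) x <= eta i) ->
  (forall x, inS m g x -> - peval p x <= beta) ->
  ER_is_inf (fun v => exists x, inS m g x /\ v = peval p x) pstar ->
  (forall n' d' r, (1 <= n')%nat -> (1 <= d')%nat -> forall q, K r n' d' q ->
      is_form n' (2 * d') q /\ nonneg_fun q) ->
  (forall n' d', (1 <= n')%nat -> (1 <= d')%nat ->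
      K O n' d' (s n' d') /\ pos_def n' (s n' d')) ->
  (forall n' d', (1 <= n')%nat -> (1 <= d')%nat -> forall q,
      is_form n' (2 * d') q -> pos_def n' q -> exists r, K r n' d' q) ->
  (forall n' d' r, (1 <= n')%nat -> (1 <= d')%nat -> forall q,
      K r n' d' q -> K (S r) n' d' q) ->
  (forall n' d' r, (1 <= n')%nat -> (1 <= d')%nat -> forall q,
      K r n' d' q -> forall eps, 0 <= eps <= 1 ->
      K r n' d' (fun z => q z + eps * s n' d' z)) ->
  (forall r, (1 <= r)%nat ->
      ER_is_sup (fun gamma => K r (n + m + 3)%nat (2 * d)%nat
                   (fun z => f_gamma n m d p g Rb eta beta gamma z
                             - / INR r * s (n + m + 3)%nat (2 * d)%nat z)) (l r)) ->
  (forall r, (1 <= r)%nat -> ERle (l r) pstar) /\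
  (forall r, (1 <= r)%nat -> ERle (l r) (l (S r))) /\
  ER_limit l pstar.
Proof.
intros _ Hvp Hvg Hd Hsp Hsg _ _ HR Heta Hbeta Hinf Hcone Hs Hexh Hsucc Hadd Hl.
assert (HN : (1 <= n + m + 3)%nat) by lia.
assert (HD : (1 <= 2 * d)%nat) by lia.
destruct (Hs _ _ HN HD) as [Hs0 HsN].
apply (feasible_sup_converges n m d p g Rb eta beta (fun r => K r (n + m + 3)%nat (2 * d)%nat)
         (s (n + m + 3)%nat (2 * d)%nat)); auto.
- intros r q Hq. apply (Hcone _ _ r HN HD q Hq).
- apply (Hcone _ _ 0%nat HN HD _ Hs0).
Qed.
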